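(* Let $R\subseteq S$, $\sigma$ be as in the context. Let $\mathbf{a}=(a_1,\ldots,a_\ell)\in(S^* )^\ell$ and $\beta_{i,j}\in S$ for $1\le i\le\ell$, $1\le j\le n_i$, satisfying: (i) $a_i-a_j^\beta\in S^*$ for all $\beta\in S^*$ and $1\le i<j\le\ell$; (ii) for each $i$, $\beta_{i,1},\ldots,\beta_{i,n_i}$ are $R$-linearly independent. Then there exist units $\gamma_{i,j}\in S^*$ ($1\le i\le\ell$, $1\le j\le n_i$) with $\gamma_{1,1}=\beta_{1,1}$, such that the skew polynomials $$G_{i,j}=\big(x-a_i^{\gamma_{i,j}}\big)\cdots\big(x-a_i^{\gamma_{i,1}}\big)\big(x-a_{i-1}^{\gamma_{i-1,n_{i-1}}}\big)\cdots\big(x-a_{i-1}^{\gamma_{i-1,1}}\big)\cdots\big(x-a_1^{\gamma_{1,n_1}}\big)\cdots\big(x-a_1^{\gamma_{1,1}}\big)\in S[x;\sigma]$$ have degree $\deg(G_{i,j})=\sum_{u=1}^{i-1}n_u+j$ and satisfy, for all $1\le u\le\ell$, $1\le v\le n_u$: $G_{i,j}(a_u^{\beta_{u,v}})=0$ if $u\le i-1$, or if $u=i$ and $v\le j$; and $G_{i,j}(a_u^{\beta_{u,v}})\in S^*$ if $u\ge i+1$, or if $u=i$ and $v\ge j+1$. This holds for all $1\le i\le\ell$ and $1\le j\le n_i$.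
   Context: $R$ is a finite commutative chain ring with maximal ideal $\mathfrak{m}$, $q=|R/\mathfrak{m}|$; $S=R[x]/(h)$ with $h$ monic of degree $m$ irreducible modulo $\mathfrak{m}$, local with maximal ideal $\mathfrak{M}=\mathfrak{m}S$ and unit group $S^*=S\setminus\mathfrak{M}$. $\sigma$ is a ring automorphism of $S$ generating the Galois group of $R\subseteq S$, with fixed ring $R$, reducing modulo $\mathfrak{M}$ to $y\mapsto y^q$ on $\mathbb{F}_{q^m}$. $S[x;\sigma]$ is the skew polynomial ring with $xa=\sigma(a)x$. For $a\in S$ and $\beta\in S^*$, $a^\beta=\sigma(\beta)a\beta^{-1}$. For $F\in S[x;\sigma]$ and $b\in S$, the remainder evaluation $F(b)$ is the unique $c\in S$ such that $F=Q\cdot(x-b)+c$ for some $Q\in S[x;\sigma]$. *)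

From HB Require Import structures.
From mathcomp Require Import all_boot all_order all_algebra.
Set Implicit Arguments. Unset Strict Implicit. Unset Printing Implicit Defensive.
Import GRing.Theory.
Local Open Scope ring_scope.

Definition is_ideal (R : finComUnitRingType) (I : {set R}) : Prop :=
  [/\ 0 \in I, (forall x y, x \in I -> y \in I -> x + y \in I)
    & (forall r x, x \in I -> r * x \in I)].

Definition chain_ring (R : finComUnitRingType) : Prop :=
  forall I J : {set R}, is_ideal I -> is_ideal J -> I \subset J \/ J \subset I.

(* k with pi : R -> k is the residue field R/m (pi surjective, kernel = the
   maximal ideal m = nonunits of R); q = #|k|.  S is presented as R[θ] with
   θ a root of h and 1, θ, ..., θ^(m-1) an R-basis (i.e. S ≅ R[x]/(h)). *)
Definition galois_setting (R S : finComUnitRingType) (iota : {rmorphism R -> S})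
  (k : finFieldType) (pi : {rmorphism R -> k}) (h : {poly R}) (theta : S)
  (sigma : {rmorphism S -> S}) : Prop :=
  [/\ chain_ring R /\ injective iota,
      (forall z : k, exists r, pi r = z) /\ (forall r, pi r = 0 <-> ~~ (r \is a GRing.unit)),
      h \is monic /\ irreducible_poly (map_poly pi h),
      root (map_poly iota h) theta /\
      bijective (fun c : {ffun 'I_(size h).-1 -> R} =>
                   \sum_(i < (size h).-1) iota (c i) * theta ^+ i)
    & [/\ bijective sigma,
          (forall s, sigma s = s <-> exists r, s = iota r),
          (forall tau : {rmorphism S -> S}, bijective tau ->
             (forall r, tau (iota r) = iota r) ->
             exists t : nat, forall s, tau s = iter t sigma s)
        & (forall y, ~~ (sigma y - y ^+ #|k| \is a GRing.unit))]].

(* A skew polynomial sum_i f_i x^i is represented by its coefficient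
   polynomial in {poly S} (coefficients on the left); addition is that of
   {poly S}, multiplication uses x a = σ(a) x. *)
Definition skew_mul (S : comUnitRingType) (sigma : S -> S) (p q : {poly S})
  : {poly S} :=
  \poly_(kk < (size p + size q).-1)
     \sum_(i < kk.+1) p`_i * iter i sigma (q`_(kk - i)).

(* Remainder evaluation: F(b) = c iff F = Q (x - b) + c for some Q. *)
Definition skew_rem (S : comUnitRingType) (sigma : S -> S) (F : {poly S})
  (b c : S) : Prop :=
  exists Q : {poly S}, F = skew_mul sigma Q ('X - b%:P) + c%:P.

Definition sconj (S : comUnitRingType) (sigma : S -> S) (a beta : S) : S :=
  sigma beta * a * beta^-1.

(* Left-multiplied product: for roots [c_1; ...; c_N] gives
   (x - c_N) ... (x - c_1). *)
Definition skew_prod (S : comUnitRingType) (sigma : S -> S) (cs : seq S)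
  : {poly S} :=
  foldl (fun P c => skew_mul sigma ('X - c%:P) P) 1 cs.

(* G_{i,j} with 0-based indices i, j (paper's G_{i+1,j+1}). *)
Definition Gpoly (S : comUnitRingType) (sigma : S -> S) (a : nat -> S)
  (n : nat -> nat) (gamma : nat -> nat -> S) (i j : nat) : {poly S} :=
  skew_prod sigma
    ([seq sconj sigma (a u) (gamma u v) | u <- iota 0 i, v <- iota 0 (n u)]
     ++ [seq sconj sigma (a i) (gamma i v) | v <- iota 0 j.+1]).

From HB Require Import structures.
From mathcomp Require Import all_boot all_order all_algebra finfield.
From mathcomp Require Import ring zify.
Set Implicit Arguments. Unset Strict Implicit. Unset Printing Implicit Defensive.
Import GRing.Theory.
Local Open Scope ring_scope.

(* For F = (x - c_N) ... (x - c_1) and a unit b, the remainder evaluation satisfies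
   F(a^b) b = L(b), where L = L_N o ... o L_1 and L_t y = a σ(y) - c_t y; since σ
   fixes R, L is R-linear.  The γ are chosen greedily, class after class:
   γ_{i,j} := L(β_{i,j}) for the roots c chosen so far, so that the new factor
   x - a_i^{γ_{i,j}} kills β_{i,j}.  One maintains that L maps units to units on
   the later classes (by (i)) and maps every R-combination of the remaining
   β_{i,v} with a unit coefficient to a unit z.  The latter survives the new
   factor: z/γ_{i,j} - r is a unit for every r in R, hence so is
   σ(z/γ_{i,j}) - z/γ_{i,j}, as σ lifts Frobenius.  Initially it is (ii): S is
   local with maximal ideal mS = p0 S for a uniformizer p0 of the chain ring R,
   and p0^(t0-1) kills mS. *)

Section SkewPolynomials.
Variables (S : comUnitRingType) (sigma : {rmorphism S -> S}).

Lemma iter_sigma0 n : iter n sigma 0 = 0.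
Proof. by elim: n => //= n ->; rewrite rmorph0. Qed.

Lemma iter_sigma1 n : iter n sigma 1 = 1.
Proof. by elim: n => //= n ->; rewrite rmorph1. Qed.

Lemma iter_sigmaN n x : iter n sigma (- x) = - iter n sigma x.
Proof. by elim: n => //= n ->; rewrite rmorphN. Qed.

Lemma skew_XsubC_mul c (P : {poly S}) :
  skew_mul sigma ('X - c%:P) P = 'X * map_poly sigma P - c *: P.
Proof.
apply/polyP => i; rewrite coef_poly size_XsubC add2n /=.
rewrite coefB coefXM coefZ coef_map /=.
case: ltnP => [|le_P_i]; last first.
  rewrite !nth_default ?rmorph0 ?mulr0 ?if_same ?subrr //; [exact: ltnW | by case: i le_P_i].
case: i => [_|i _]; first by rewrite big_ord1 coefB coefX coefC sub0r mulNr add0r.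
rewrite 2!big_ord_recl big1 => [|t _]; last by rewrite coefB coefX coefC subrr mul0r.
by rewrite /= !coefB !coefX !coefC /= subn0 subSS subn0; ring.
Qed.

Definition twist (b : S) (Q : {poly S}) := \poly_(i < size Q) (Q`_i * iter i sigma b).

Lemma coef_twist b Q i : (twist b Q)`_i = Q`_i * iter i sigma b.
Proof. by rewrite coef_poly; case: ltnP => // ?; rewrite nth_default // mul0r. Qed.

Lemma skew_mul_XsubC b (Q : {poly S}) :
  skew_mul sigma Q ('X - b%:P) = Q * 'X - twist b Q.
Proof.
apply/polyP => i; rewrite coef_poly size_XsubC addn2 /= coefB coefMX coef_twist.
case: ltnP => [|le_Q_i]; last first.
  rewrite !nth_default ?mul0r ?if_same ?subr0 //; [exact: ltnW | by case: i le_Q_i].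
case: i => [_|i _]; first by rewrite big_ord1 /= coefB coefX coefC /=; ring.
rewrite 2!big_ord_recr /= big1 => [|t _].
  rewrite subnn subSn // subnn !coefB !coefX !coefC /= subr0 sub0r.
  by rewrite iter_sigmaN iter_sigma1 rmorphN; ring.
have [ne1 ne0] : (i.+1 - t != 1)%N /\ (i.+1 - t != 0)%N by have := ltn_ord t; lia.
by rewrite coefB coefX coefC (negPf ne1) (negPf ne0) subrr iter_sigma0 mulr0.
Qed.

(* If F = Q (x - b) + r then (x - c) F = ((x - c) Q + σ(r)) (x - b) + σ(r) b - c r. *)
Definition rem_skew_prod (cs : seq S) (b : S) :=
  foldl (fun r c => sigma r * b - c * r) 1 cs.

Lemma skew_rem_prod cs b : skew_rem sigma (skew_prod sigma cs) b (rem_skew_prod cs b).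
Proof.
elim/last_ind: cs => [|cs c [Q defF]].
  have twist0 : twist b 0 = 0 by apply/polyP => i; rewrite coef_twist coef0 mul0r.
  by exists 0; rewrite skew_mul_XsubC twist0 mul0r subrr add0r polyC1.
rewrite /skew_prod /rem_skew_prod !foldl_rcons -/(skew_prod _ _) -/(rem_skew_prod _ _).
exists ('X * map_poly sigma Q - c *: Q + (sigma (rem_skew_prod cs b))%:P).
rewrite skew_XsubC_mul defF !skew_mul_XsubC; apply/polyP => i.
rewrite !(coefD, coefB, coefN, coefXM, coefMX, coefZ, coef_map, coefC, coef_twist) /=.
by case: i => [|[|i]] /=; rewrite ?(rmorphD, rmorphB, rmorphN, rmorphM, rmorph0) /=; ring.
Qed.

Lemma skew_XsubC_mul_monic c P : P \is monic ->
  skew_mul sigma ('X - c%:P) P \is monic /\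
  size (skew_mul sigma ('X - c%:P) P) = (size P).+1.
Proof.
move=> monP; rewrite skew_XsubC_mul.
have s_lead : sigma (lead_coef P) = 1 by rewrite (monicP monP) rmorph1.
have lead_sP : lead_coef (map_poly sigma P) = 1.
  by rewrite lead_coef_map_eq /= s_lead // oner_neq0.
have size_sP : size (map_poly sigma P) = size P.
  by rewrite size_map_poly_id0 // s_lead oner_neq0.
have size_XsP : size ('X * map_poly sigma P) = (size P).+1.
  by rewrite mulrC size_mulX ?size_sP // -size_poly_gt0 size_sP size_poly_gt0 monic_neq0.
have small_cP : (size (- (c *: P)) < size ('X * map_poly sigma P)%R)%N.
  by rewrite size_polyN size_XsP ltnS size_scale_leq.
split; last by rewrite size_polyDl.
by apply/monicP; rewrite lead_coefDl // mulrC lead_coefMX.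
Qed.

Lemma size_skew_prod cs : size (skew_prod sigma cs) = (size cs).+1.
Proof.
suff [] : skew_prod sigma cs \is monic /\ size (skew_prod sigma cs) = (size cs).+1 by [].
elim/last_ind: cs => [|cs c [monP sizeP]]; first by rewrite monic1 size_poly1.
rewrite /skew_prod foldl_rcons -/(skew_prod _ _) size_rcons -sizeP.
exact: skew_XsubC_mul_monic.
Qed.

Definition conj_eval (x : S) (cs : seq S) (y : S) :=
  foldl (fun y c => x * sigma y - c * y) y cs.

Lemma conj_eval_rcons x cs c y :
  conj_eval x (rcons cs c) y = x * sigma (conj_eval x cs y) - c * conj_eval x cs y.
Proof. by rewrite /conj_eval foldl_rcons. Qed.

Lemma conj_evalB x cs y z : conj_eval x cs (y - z) = conj_eval x cs y - conj_eval x cs z.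
Proof. by elim/last_ind: cs => // cs c IH; rewrite !conj_eval_rcons IH rmorphB; ring. Qed.

Lemma conj_evalZ x cs r y : sigma r = r -> conj_eval x cs (r * y) = r * conj_eval x cs y.
Proof.
by move=> sr; elim/last_ind: cs => // cs c IH; rewrite !conj_eval_rcons IH rmorphM sr; ring.
Qed.

Lemma rem_skew_prod_sconj x cs b : b \is a GRing.unit ->
  rem_skew_prod cs (sconj sigma x b) * b = conj_eval x cs b.
Proof.
move=> ub; elim/last_ind: cs => [|cs c IH]; first by rewrite mul1r.
rewrite conj_eval_rcons -IH /rem_skew_prod foldl_rcons -/(rem_skew_prod _ _) /sconj.
set r := rem_skew_prod cs _.
rewrite mulrBl rmorphM -!mulrA mulVr // mulr1; ring.
Qed.

Lemma sconj_mulK x g : g \is a GRing.unit -> sconj sigma x g * g = sigma g * x.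
Proof. by move=> ug; rewrite /sconj mulrVK. Qed.

Lemma factor_sconj_same_class x g z : g \is a GRing.unit ->
  x * sigma z - sconj sigma x g * z = x * sigma g * (sigma (z / g) - z / g).
Proof.
move=> ug; have usg : sigma g \is a GRing.unit by rewrite rmorph_unit.
rewrite rmorphM (rmorphV _ ug) /sconj.
have E sgi : x * sigma z = x * sigma g * (sigma z * sgi) + x * sigma z * (1 - sigma g * sgi).
  by ring.
by rewrite (E (sigma g)^-1) mulrV // subrr mulr0 addr0; ring.
Qed.

(* y σ(z) - x^g z = - (σ(g) z / g) (x - y^(z/g)) *)
Lemma factor_sconj_unit_other_class x y g z : g \is a GRing.unit -> z \is a GRing.unit ->
  x - sconj sigma y (z / g) \is a GRing.unit ->
  y * sigma z - sconj sigma x g * z \is a GRing.unit.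
Proof.
move=> ug uz; have usg : sigma g \is a GRing.unit by rewrite rmorph_unit.
rewrite /sconj rmorphM (rmorphV _ ug) invrM ?unitrV // invrK => u_sep.
have E gi zi sgi : y * sigma z - sigma g * x * gi * z =
  - (sigma g * gi * z) * (x - sigma z * sgi * y * (g * zi))
  - (sigma g * sgi) * (gi * g) * (z * zi) * (y * sigma z) + y * sigma z.
  by ring.
rewrite (E g^-1 z^-1 (sigma g)^-1) mulrV // mulVr // mulrV // !mul1r subrK.
by rewrite unitrM unitrN !unitrM usg unitrV ug uz u_sep.
Qed.
End SkewPolynomials.

Lemma nilpotency_index (R : nzRingType) (x : R) :
  (exists t, x ^+ t = 0) -> exists t, x ^+ t = 0 /\ x ^+ t.-1 != 0.
Proof.
move=> nil_x; have ex_t : exists t, x ^+ t == 0 by have [t xt] := nil_x; exists t; apply/eqP.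
case: (ex_minnP ex_t) => t /eqP xt min_t; exists t; split => //.
case: t xt min_t => [|t] /= xt min_t; first by rewrite expr0 oner_neq0.
by apply/negP => /min_t; rewrite ltnn.
Qed.

Section ResidueField.
Variables (R : finComUnitRingType) (k : finFieldType) (pi : {rmorphism R -> k}).
Hypotheses (pi_surj : forall z : k, exists r, pi r = z)
  (pi_ker : forall r, pi r = 0 <-> ~~ (r \is a GRing.unit)).

Lemma unit_pi_neq0 r : pi r != 0 -> r \is a GRing.unit.
Proof. by move=> pr_neq0; apply/negPn/negP => /pi_ker /eqP; rewrite (negPf pr_neq0). Qed.

Lemma pi_eq0_nilpotent x : pi x = 0 -> exists t, x ^+ t = 0.
Proof.
move=> pix0; pose f (i : 'I_#|R|.+1) := x ^+ i.
have /injectivePn[i [j ne_ij eq_ij]] : ~~ injectiveb f.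
  by apply/negP => /injectiveP/leq_card; rewrite card_ord ltnn.
have {ne_ij eq_ij} [u [d [d_gt0 eq_ud]]] : exists u d, (0 < d)%N /\ x ^+ u = x ^+ (u + d).
  case: (ltngtP i j) => [lt_ij|lt_ji|/val_inj eq_ij']; last by rewrite eq_ij' eqxx in ne_ij.
    by exists i, (j - i)%N; rewrite subn_gt0 subnKC // ltnW.
  by exists j, (i - j)%N; rewrite subn_gt0 subnKC // ltnW.
have u_1Bxd : 1 - x ^+ d \is a GRing.unit.
  by apply: unit_pi_neq0; rewrite rmorphB rmorph1 rmorphXn pix0 expr0n gtn_eqF // subr0 oner_neq0.
by exists u; apply: (mulIr u_1Bxd); rewrite mul0r mulrBr mulr1 -exprD -eq_ud subrr.
Qed.

(* A generator of a largest principal ideal inside m generates m, by the chain condition. *)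
Lemma chain_ring_uniformizer : chain_ring R ->
  exists p0, pi p0 = 0 /\ forall x, pi x = 0 -> exists r, x = p0 * r.
Proof.
move=> chainR; pose prin (x : R) : {set R} := [set x * r | r : R].
have prin_ideal x : is_ideal (prin x).
  split.
  - by apply/imsetP; exists 0; rewrite ?mulr0.
  - move=> _ _ /imsetP[r1 _ ->] /imsetP[r2 _ ->].
    by apply/imsetP; exists (r1 + r2); rewrite ?mulrDr.
  - by move=> r _ /imsetP[r1 _ ->]; apply/imsetP; exists (r * r1); rewrite // mulrCA.
have prin_id x : x \in prin x by apply/imsetP; exists 1; rewrite ?mulr1.
have [p0 /eqP pip0 max_p0] := @arg_maxnP R 0 (fun x => pi x == 0) (fun x => #|prin x|)
  (introT eqP (rmorph0 pi)).
exists p0; split => // x /eqP pix.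
suff /imsetP[r _ ->] : x \in prin p0 by exists r.
case: (chainR _ _ (prin_ideal x) (prin_ideal p0)) => [/subsetP|sub_p0x]; first exact.
by rewrite (_ : prin p0 = prin x) //; apply/eqP; rewrite eqEcard sub_p0x; exact: max_p0.
Qed.

Definition lift_res (z : k) : R :=
  xchoose (let: ex_intro r pr := pi_surj z in ex_intro (fun r => pi r == z) r (introT eqP pr)).

Lemma lift_resK z : pi (lift_res z) = z.
Proof. exact/eqP/(xchooseP (P := fun r => pi r == z)). Qed.

Definition lift_poly (p : {poly k}) : {poly R} := \poly_(i < size p) lift_res p`_i.

Lemma lift_polyK p : map_poly pi (lift_poly p) = p.
Proof.
apply/polyP => i; rewrite coef_map coef_poly /=.
by case: ltnP => ?; [rewrite lift_resK | rewrite rmorph0 nth_default].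
Qed.
End ResidueField.

Section Extension.
Variables (R S : finComUnitRingType) (incl : {rmorphism R -> S})
  (k : finFieldType) (pi : {rmorphism R -> k}) (p0 : R) (t0 : nat).
Hypotheses (pi_surj : forall z : k, exists r, pi r = z)
  (pi_ker : forall r, pi r = 0 <-> ~~ (r \is a GRing.unit))
  (p0_gen : forall x, pi x = 0 -> exists r, x = p0 * r) (p0_nil : p0 ^+ t0 = 0)
  (p0_nil_index : p0 ^+ t0.-1 != 0).

Definition in_mS (y : S) := exists w, y = incl p0 * w.

Lemma in_mS0 : in_mS 0.
Proof. by exists 0; rewrite mulr0. Qed.

Lemma in_mSD x y : in_mS x -> in_mS y -> in_mS (x + y).
Proof. by move=> [w1 ->] [w2 ->]; exists (w1 + w2); rewrite mulrDr. Qed.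

Lemma in_mSN x : in_mS x -> in_mS (- x).
Proof. by move=> [w ->]; exists (- w); rewrite mulrN. Qed.

Lemma in_mSMl z x : in_mS x -> in_mS (z * x).
Proof. by move=> [w ->]; exists (z * w); rewrite mulrCA. Qed.

Lemma in_mS_incl r x : pi r = 0 -> in_mS (incl r * x).
Proof. by move=> /p0_gen[r' ->]; exists (incl r' * x); rewrite rmorphM mulrA. Qed.

Lemma in_mS_nilpotent y : in_mS y -> y ^+ t0 = 0.
Proof. by move=> [w ->]; rewrite exprMn -rmorphXn p0_nil rmorph0 mul0r. Qed.

Lemma in_mS_nonunit y : in_mS y -> ~~ (y \is a GRing.unit).
Proof. by move=> /in_mS_nilpotent y0; apply/negP => /(unitrX t0); rewrite y0 unitr0. Qed.

Lemma unitrD_in_mS u e : u \is a GRing.unit -> in_mS e -> u + e \is a GRing.unit.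
Proof.
move=> uu me; set z := - (u^-1 * e).
have z0 : z ^+ t0 = 0 by apply/in_mS_nilpotent/in_mSN/in_mSMl.
have u_1Bz : 1 - z \is a GRing.unit.
  apply/unitrPr; exists (\sum_(i < t0) 1 ^+ (t0.-1 - i) * z ^+ i).
  by rewrite -subrXX expr1n z0 subr0.
by rewrite (_ : u + e = u * (1 - z)) ?unitrM ?uu // /z opprK mulrDr mulr1 mulVKr.
Qed.

Lemma horner_in_mS (D : {poly R}) x : map_poly pi D = 0 -> in_mS (map_poly incl D).[x].
Proof.
move=> D0; rewrite horner_coef; apply: (big_ind in_mS) => [||i _]; first exact: in_mS0.
  exact: in_mSD.
by rewrite coef_map /=; apply: in_mS_incl; rewrite -coef_map D0 coef0.
Qed.

Section PowerBasis.
Variables (h : {poly R}) (theta : S).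
Hypotheses (h_monic : h \is monic) (h_irr : irreducible_poly (map_poly pi h))
  (h_theta : root (map_poly incl h) theta)
  (power_basis : bijective (fun c : {ffun 'I_(size h).-1 -> R} =>
                   \sum_(i < (size h).-1) incl (c i) * theta ^+ i)).

(* The reduction of s := \sum_i c_i X^i is nonzero of degree < deg h, hence coprime
   to the irreducible reduction of h; lifting a Bezout relation u s + v h = w and
   evaluating at theta shows that s(theta) divides a unit plus an element of mS. *)
Lemma coord_unit m (c : 'I_m -> R) (i0 : 'I_m) : pi (c i0) != 0 -> (m < size h)%N ->
  \sum_(i < m) incl (c i) * theta ^+ i \is a GRing.unit.
Proof.
move=> c_i0 lt_m_h; pose s : {poly R} := \sum_(i < m) c i *: 'X^i.
have s_theta : (map_poly incl s).[theta] = \sum_(i < m) incl (c i) * theta ^+ i.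
  rewrite raddf_sum horner_sum; apply: eq_bigr => i _.
  by rewrite /= map_polyZ map_polyXn hornerZ hornerXn.
have pi_s : map_poly pi s = \sum_(i < m) pi (c i) *: 'X^i.
  by rewrite raddf_sum; apply: eq_bigr => i _; rewrite /= map_polyZ map_polyXn.
have size_pi_s : (size (map_poly pi s) <= m)%N.
  rewrite pi_s; apply: (big_ind (fun p : {poly k} => (size p <= m)%N)).
  - by rewrite size_poly0.
  - by move=> p q sp sq; rewrite (leq_trans (size_polyD _ _)) // geq_max sp sq.
  - by move=> i _; rewrite (leq_trans (size_scale_leq _ _)) // size_polyXn.
have pi_s_neq0 : map_poly pi s != 0.
  apply: contraNneq c_i0 => /(congr1 (fun p : {poly k} => p`_i0)).
  rewrite pi_s coef_sum coef0 (bigD1 i0) //= big1 => [|j ne_j_i0].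
    by rewrite coefZ coefXn eqxx mulr1 addr0 => ->.
  by rewrite coefZ coefXn eq_sym (inj_eq val_inj) (negPf ne_j_i0) mulr0.
have size_pi_h : size (map_poly pi h) = size h.
  by rewrite size_map_poly_id0 // (monicP h_monic) rmorph1 oner_neq0.
have : coprimep (map_poly pi s) (map_poly pi h).
  rewrite coprimep_sym irreducible_poly_coprime //; apply/negP.
  by move=> /(dvdp_leq pi_s_neq0); rewrite size_pi_h leqNgt (leq_ltn_trans size_pi_s).
case/Bezout_coprimepP => -[u v] /= Bezout_uv.
have /size_poly1P[w w_neq0 w_def] : size (u * map_poly pi s + v * map_poly pi h) == 1%N.
  by rewrite size_poly_eq1.
pose E := lift_poly pi_surj u * s + lift_poly pi_surj v * h - (lift_res pi_surj w)%:P.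
have E0 : map_poly pi E = 0.
  by rewrite !rmorphB !rmorphD !rmorphM /= !lift_polyK map_polyC /= lift_resK w_def subrr.
have := horner_in_mS theta E0.
rewrite !rmorphB !rmorphD !rmorphM /= map_polyC /= !hornerE s_theta (rootP h_theta).
rewrite mulr0 addr0 => m_E.
have uw : incl (lift_res pi_surj w) \is a GRing.unit.
  by rewrite rmorph_unit // (unit_pi_neq0 pi_ker) // lift_resK.
by have := unitrD_in_mS uw m_E; rewrite addrC subrK unitrM => /andP[].
Qed.

Lemma nonunit_in_mS y : ~~ (y \is a GRing.unit) -> in_mS y.
Proof.
move=> nuy; have [coord _ coordK] := power_basis.
have [i0 c_i0|c_m] := pickP (fun i => pi (coord y i) != 0).
  have lt_h : ((size h).-1 < size h)%N by rewrite prednK // size_poly_gt0 monic_neq0.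
  by move: nuy; rewrite -[y]coordK (coord_unit c_i0).
rewrite -[y]coordK; apply: (big_ind in_mS) => [||i _]; [exact: in_mS0 | exact: in_mSD |].
by apply: in_mS_incl; apply/eqP; have := c_m i; rewrite /= => /negbFE.
Qed.

Lemma nonunitD (x y : S) : ~~ (x \is a GRing.unit) -> ~~ (y \is a GRing.unit) ->
  ~~ (x + y \is a GRing.unit).
Proof. by move=> /nonunit_in_mS mx /nonunit_in_mS my; apply/in_mS_nonunit/in_mSD. Qed.

(* A nonunit combination lies in mS = p0 S, so multiplying it by p0^(t0-1) gives
   an R-relation with the nonzero coefficient p0^(t0-1) c_w. *)
Lemma free_comb_unit (bs : nat -> S) N (c : nat -> R) w :
  (forall c : nat -> R, \sum_(j < N) incl (c j) * bs j = 0 -> forall j, (j < N)%N -> c j = 0) ->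
  (w < N)%N -> c w \is a GRing.unit -> \sum_(j < N) incl (c j) * bs j \is a GRing.unit.
Proof.
move=> free_bs lt_w_N uc; apply/negPn/negP => /nonunit_in_mS[W W_def].
have relation : \sum_(j < N) incl (p0 ^+ t0.-1 * c j) * bs j = 0.
  transitivity (incl (p0 ^+ t0.-1) * \sum_(j < N) incl (c j) * bs j).
    by rewrite mulr_sumr; apply: eq_bigr => j _; rewrite rmorphM mulrA.
  rewrite W_def mulrA -rmorphM -exprSr.
  by case: t0 p0_nil p0_nil_index => [-> /eqP //|t /= ->]; rewrite rmorph0 mul0r.
move/eqP: (free_bs (fun j => p0 ^+ t0.-1 * c j) relation w lt_w_N).
by rewrite mulIr_eq0 ?(negPf p0_nil_index) //; apply: mulIr.
Qed.

(* Modulo mS, t^q - t is congruent to the unit \prod_(z : k) (t - z) and σ(t) to t^q. *)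
Lemma frobenius_subr_unit (sigma : {rmorphism S -> S}) t :
  (forall y, ~~ (sigma y - y ^+ #|k| \is a GRing.unit)) ->
  (forall r, t - incl r \is a GRing.unit) -> sigma t - t \is a GRing.unit.
Proof.
move=> sigma_frob t_notin_R; apply/negPn/negP => nu_st.
have nu_tq : ~~ (t ^+ #|k| - t \is a GRing.unit).
  rewrite (_ : _ - t = (sigma t - t) + - (sigma t - t ^+ #|k|)); last by ring.
  by rewrite nonunitD // unitrN.
pose D : {poly R} := \prod_(z : k) ('X - (lift_res pi_surj z)%:P) - ('X^#|k| - 'X).
have D0 : map_poly pi D = 0.
  rewrite rmorphB rmorph_prod /=.
  under eq_bigr do rewrite map_polyXsubC lift_resK.
  by rewrite rmorphB /= map_polyXn map_polyX finField_genPoly subrr.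
have := horner_in_mS t D0.
rewrite rmorphB rmorph_prod /= hornerD hornerN horner_prod.
under eq_bigr do rewrite map_polyXsubC hornerXsubC.
rewrite rmorphB /= map_polyXn map_polyX hornerD hornerN hornerXn hornerX => m_D.
have u_prod : \prod_(z : k) (t - incl (lift_res pi_surj z)) \is a GRing.unit.
  by apply: (big_ind (fun x => x \is a GRing.unit)) => // [|x y ux uy]; rewrite ?unitr1 ?unitrM ?ux.
have := unitrD_in_mS u_prod (in_mSN m_D); rewrite opprB addrC subrK => u_tq.
by rewrite u_tq in nu_tq.
Qed.
End PowerBasis.
End Extension.

Section Construction.
Variables (R S : comUnitRingType) (incl : {rmorphism R -> S}) (sigma : {rmorphism S -> S})
  (l : nat) (a : nat -> S) (n : nat -> nat) (beta : nat -> nat -> S).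
Hypotheses (sigma_incl : forall r, sigma (incl r) = incl r)
  (a_unit : forall i, (i < l)%N -> a i \is a GRing.unit)
  (a_sep : forall i j, (i < j < l)%N -> forall b : S, b \is a GRing.unit ->
     a i - sconj sigma (a j) b \is a GRing.unit)
  (beta_comb_unit : forall i c w, (i < l)%N -> (w < n i)%N -> c w \is a GRing.unit ->
     \sum_(v < n i) incl (c v) * beta i v \is a GRing.unit)
  (sigma_subr_unit : forall t, (forall r, t - incl r \is a GRing.unit) ->
     sigma t - t \is a GRing.unit).

Fixpoint class_roots (i : nat) (P : seq S) (j : nat) : seq S :=
  if j is j'.+1 then
    let Q := class_roots i P j' in
    rcons Q (sconj sigma (a i) (conj_eval sigma (a i) Q (beta i j')))
  else P.

Fixpoint roots_before (i : nat) : seq S :=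
  if i is i'.+1 then class_roots i' (roots_before i') (n i') else [::].

Definition roots i j := class_roots i (roots_before i) j.

Definition gamma i j := conj_eval sigma (a i) (roots i j) (beta i j).

Lemma rootsS i j : roots i j.+1 = rcons (roots i j) (sconj sigma (a i) (gamma i j)).
Proof. by []. Qed.

Lemma roots_class_end i : roots i.+1 0 = roots i (n i).
Proof. by []. Qed.

Lemma roots_cat i j :
  roots i j = roots_before i ++ [seq sconj sigma (a i) (gamma i v) | v <- iota 0 j].
Proof.
elim: j => [|j IHj]; first by rewrite cats0.
by rewrite rootsS IHj -addn1 iotaD map_cat catA cats1.
Qed.

Lemma roots_before_allpairs i : roots_before i =
  [seq sconj sigma (a u) (gamma u v) | u <- iota 0 i, v <- iota 0 (n u)].
Proof.
elim: i => // i IHi.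
by rewrite -[roots_before i.+1]/(roots i (n i)) roots_cat IHi -[i.+1]addn1 iotaD allpairs_cat /= cats0.
Qed.

Lemma Gpoly_roots i j : Gpoly sigma a n gamma i j = skew_prod sigma (roots i j.+1).
Proof. by rewrite roots_cat roots_before_allpairs. Qed.

Lemma sum_incl_delta N (bs : nat -> S) j : (j < N)%N ->
  \sum_(v < N) incl ((v == j :> nat)%:R) * bs v = bs j.
Proof.
move=> lt_jN; rewrite (bigD1 (Ordinal lt_jN)) //= eqxx rmorph1 mul1r big1 ?addr0 // => v.
by rewrite -(inj_eq val_inj) /= => /negPf->; rewrite rmorph0 mul0r.
Qed.

Lemma beta_unit i j : (i < l)%N -> (j < n i)%N -> beta i j \is a GRing.unit.
Proof.
move=> lt_il lt_jn; rewrite -(sum_incl_delta _ lt_jn).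
by apply: (@beta_comb_unit i (fun v => (v == j)%:R) j); rewrite ?eqxx ?unitr1.
Qed.

Definition admissible (P : seq S) i j :=
  [/\ forall u v, (v < n u)%N -> (u < i)%N \/ (u = i /\ (v < j)%N) ->
        conj_eval sigma (a u) P (beta u v) = 0,
      forall u y, (i < u < l)%N -> y \is a GRing.unit ->
        conj_eval sigma (a u) P y \is a GRing.unit
    & forall c w, (j <= w < n i)%N -> c w \is a GRing.unit ->
        conj_eval sigma (a i) P (\sum_(v < n i) incl (c v) * beta i v) \is a GRing.unit].

Lemma admissible_beta_unit P i j v : (j <= v < n i)%N -> admissible P i j ->
  conj_eval sigma (a i) P (beta i v) \is a GRing.unit.
Proof.
move=> /andP[le_jv lt_vn] [_ _ P_class]; rewrite -(sum_incl_delta _ lt_vn).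
by apply: (P_class (fun w => (w == v)%:R) v); rewrite ?le_jv ?lt_vn ?eqxx ?unitr1.
Qed.

Lemma admissible_nil : (0 < l)%N -> admissible [::] 0 0.
Proof.
move=> l_gt0; split=> [u v _ [//|[-> //]] | u y _ // | c w /andP[_ lt_wn] ucw].
exact: (beta_comb_unit l_gt0 lt_wn).
Qed.

Lemma admissible_next P i : (i.+1 < l)%N -> admissible P i (n i) -> admissible P i.+1 0.
Proof.
move=> lt_i1l [P_zero P_other _]; split.
- move=> u v lt_vn [|[//]]; rewrite ltnS leq_eqVlt => /orP[/eqP eq_ui|lt_ui].
    by apply: P_zero => //; right; rewrite -eq_ui.
  by apply: P_zero => //; left.
- by move=> u y /andP[lt_iu lt_ul]; apply: P_other; rewrite lt_ul andbT (ltnW lt_iu).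
- move=> c w /andP[_ lt_wn] ucw; apply: P_other; first by rewrite ltnSn.
  exact: (beta_comb_unit lt_i1l lt_wn).
Qed.

Lemma admissible_rcons P i j : (i < l)%N -> (j < n i)%N -> admissible P i j ->
  admissible (rcons P (sconj sigma (a i) (conj_eval sigma (a i) P (beta i j)))) i j.+1.
Proof.
move=> lt_il lt_jn adm_P; set g := conj_eval sigma (a i) P (beta i j).
have ug : g \is a GRing.unit by apply: admissible_beta_unit adm_P; rewrite leqnn.
case: adm_P => P_zero P_other P_class.
split=> [u v lt_vn uv_lt | u y lt_iul uy | c w /andP[lt_jw lt_wn] ucw]; rewrite conj_eval_rcons.
- have [[-> ->]|old] : (u = i /\ v = j) \/ ((u < i)%N \/ (u = i /\ (v < j)%N)).
    case: uv_lt => [|[->]]; first by right; left.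
    by rewrite ltnS leq_eqVlt => /orP[/eqP ->|]; [left | right; right].
  by rewrite sconj_mulK // mulrC subrr.
  by rewrite P_zero // rmorph0 !mulr0 subrr.
- apply: factor_sconj_unit_other_class => //; first exact: P_other.
  by apply: (a_sep lt_iul); rewrite unitrM unitrV ug andbT P_other.
- set z := conj_eval sigma (a i) P _.
  (* z - r g is the value at the combination c - r δ_j, whose w-th coefficient is c_w. *)
  rewrite factor_sconj_same_class // !unitrM a_unit // rmorph_unit // sigma_subr_unit // => r.
  pose c' v := c v - r * (v == j)%:R.
  have z_r : z - incl r * g = conj_eval sigma (a i) P (\sum_(v < n i) incl (c' v) * beta i v).
    rewrite -conj_evalZ // -conj_evalB -(sum_incl_delta _ lt_jn) mulr_sumr -sumrB.
    by congr conj_eval; apply: eq_bigr => v _; rewrite rmorphB rmorphM mulrBl mulrA.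
  have -> : z / g - incl r = (z - incl r * g) / g by rewrite mulrBl mulrK.
  rewrite unitrM unitrV ug andbT z_r; apply: (P_class _ w).
    by rewrite (ltnW lt_jw) lt_wn.
  by rewrite /c' (gtn_eqF lt_jw) mulr0 subr0.
Qed.

Lemma admissible_class i j : (i < l)%N -> admissible (roots i 0) i 0 ->
  (j <= n i)%N -> admissible (roots i j) i j.
Proof.
move=> lt_il adm0; elim: j => // j IHj lt_jn.
by rewrite rootsS /gamma; apply: admissible_rcons => //; apply: IHj (ltnW lt_jn).
Qed.

Lemma admissible_roots i j : (i < l)%N -> (j <= n i)%N -> admissible (roots i j) i j.
Proof.
move=> lt_il; apply: admissible_class => //.
elim: i lt_il => [|i IHi] lt_il; first exact: admissible_nil.
rewrite roots_class_end; apply: admissible_next => //.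
by apply: admissible_class => //; [apply: ltnW | apply: IHi; apply: ltnW].
Qed.

Lemma gamma_unit i j : (i < l)%N -> (j < n i)%N -> gamma i j \is a GRing.unit.
Proof.
move=> lt_il lt_jn; apply: (admissible_beta_unit (j := j)); first by rewrite leqnn.
exact: admissible_roots (ltnW lt_jn).
Qed.

Lemma size_class_roots i P j : size (class_roots i P j) = (size P + j)%N.
Proof. by elim: j => [|j IHj] /=; rewrite ?addn0 // size_rcons IHj addnS. Qed.

Lemma size_roots_before i : size (roots_before i) = (\sum_(u < i) n u)%N.
Proof. by elim: i => [|i IHi]; rewrite ?big_ord0 // big_ord_recr /= size_class_roots IHi. Qed.

Lemma size_Gpoly i j : (size (Gpoly sigma a n gamma i j)).-1 = (\sum_(u < i) n u + j.+1)%N.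
Proof. by rewrite Gpoly_roots size_skew_prod /= size_class_roots size_roots_before. Qed.

Lemma Gpoly_rem_eq0 i j u v : (i < l)%N -> (j < n i)%N -> (v < n u)%N ->
  (u < i)%N \/ (u = i /\ (v <= j)%N) ->
  skew_rem sigma (Gpoly sigma a n gamma i j) (sconj sigma (a u) (beta u v)) 0.
Proof.
move=> lt_il lt_jn lt_vn uv_le; have [P_zero _ _] := admissible_roots lt_il lt_jn.
have lt_ul : (u < l)%N by case: uv_le => [/ltn_trans->|[->]].
rewrite Gpoly_roots.
suff <- : rem_skew_prod sigma (roots i j.+1) (sconj sigma (a u) (beta u v)) = 0.
  exact: skew_rem_prod.
have ub := beta_unit lt_ul lt_vn.
by apply: (mulIr ub); rewrite mul0r rem_skew_prod_sconj // P_zero.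
Qed.

Lemma Gpoly_rem_unit i j u v : (i < l)%N -> (j < n i)%N -> (u < l)%N -> (v < n u)%N ->
  (i < u)%N \/ (u = i /\ (j < v)%N) ->
  exists c, c \is a GRing.unit /\
    skew_rem sigma (Gpoly sigma a n gamma i j) (sconj sigma (a u) (beta u v)) c.
Proof.
move=> lt_il lt_jn lt_ul lt_vn uv_gt; rewrite Gpoly_roots.
exists (rem_skew_prod sigma (roots i j.+1) (sconj sigma (a u) (beta u v))).
split; last exact: skew_rem_prod.
have adm := admissible_roots lt_il lt_jn; have ub := beta_unit lt_ul lt_vn.
suff : rem_skew_prod sigma (roots i j.+1) (sconj sigma (a u) (beta u v)) * beta u v
  \is a GRing.unit by rewrite unitrM => /andP[].
rewrite rem_skew_prod_sconj //; case: uv_gt => [lt_iu | [eq_ui lt_jv]].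
  by case: adm => _ P_other _; apply: P_other; rewrite ?lt_iu.
by rewrite eq_ui in lt_vn *; apply: admissible_beta_unit adm; rewrite lt_jv.
Qed.
End Construction.

(* Indices are 0-based: i < l, j < n i correspond to the paper's i+1, j+1. *)
Theorem theorem2 (R S : finComUnitRingType) (iota : {rmorphism R -> S})
  (k : finFieldType) (pi : {rmorphism R -> k}) (h : {poly R}) (theta : S)
  (sigma : {rmorphism S -> S})
  (l : nat) (a : nat -> S) (n : nat -> nat) (beta : nat -> nat -> S) :
  galois_setting iota pi h theta sigma ->
  (forall i, (i < l)%N -> a i \is a GRing.unit) ->
  (forall i j, (i < j < l)%N -> forall b : S, b \is a GRing.unit ->
     a i - sconj sigma (a j) b \is a GRing.unit) ->
  (forall i, (i < l)%N -> forall c : nat -> R,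
     \sum_(j < n i) iota (c j) * beta i j = 0 ->
     forall j, (j < n i)%N -> c j = 0) ->
  exists gamma : nat -> nat -> S,
    [/\ forall i j, (i < l)%N -> (j < n i)%N -> gamma i j \is a GRing.unit,
        gamma 0%N 0%N = beta 0%N 0%N
      & forall i j, (i < l)%N -> (j < n i)%N ->
          [/\ (size (Gpoly sigma a n gamma i j)).-1 = (\sum_(u < i) n u + j.+1)%N,
              forall u v, (u < l)%N -> (v < n u)%N ->
                ((u < i)%N \/ (u = i /\ (v <= j)%N)) ->
                skew_rem sigma (Gpoly sigma a n gamma i j)
                  (sconj sigma (a u) (beta u v)) 0
            & forall u v, (u < l)%N -> (v < n u)%N ->
                ((i < u)%N \/ (u = i /\ (j < v)%N)) ->
                exists c : S, c \is a GRing.unit /\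
                  skew_rem sigma (Gpoly sigma a n gamma i j)
                    (sconj sigma (a u) (beta u v)) c]].
Proof.
move=> [[chainR _] [pi_surj pi_ker] [h_monic h_irr] [h_theta power_basis]
        [_ sigma_fixed _ sigma_frob]] a_unit a_sep beta_free.
have [p0 [pi_p0 p0_gen]] := chain_ring_uniformizer pi chainR.
have [t0 [p0_nil p0_t0]] := nilpotency_index (pi_eq0_nilpotent pi_ker pi_p0).
have sigma_iota r : sigma (iota r) = iota r by apply/sigma_fixed; exists r.
have beta_comb_unit i c w : (i < l)%N -> (w < n i)%N -> c w \is a GRing.unit ->
    \sum_(v < n i) iota (c v) * beta i v \is a GRing.unit.
  move=> lt_il lt_wn ucw; apply: (free_comb_unit pi_surj pi_ker p0_gen p0_nil
    p0_t0 h_monic h_irr h_theta power_basis (beta_free i lt_il) lt_wn ucw).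
have sigma_subr_unit t : (forall r, t - iota r \is a GRing.unit) -> sigma t - t \is a GRing.unit.
  exact: (frobenius_subr_unit pi_surj pi_ker p0_gen p0_nil h_monic h_irr h_theta power_basis).
exists (gamma sigma a n beta); split=> [i j|//|i j lt_il lt_jn].
  exact: (gamma_unit sigma_iota a_unit a_sep beta_comb_unit sigma_subr_unit).
split=> [|u v _|u v lt_ul]; first exact: size_Gpoly.
  exact: (Gpoly_rem_eq0 sigma_iota a_unit a_sep beta_comb_unit sigma_subr_unit).
exact: (Gpoly_rem_unit sigma_iota a_unit a_sep beta_comb_unit sigma_subr_unit).
Qed.
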